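(* Let $(G,\sigma)$ be an RBMG explained by the leaf-colored tree $(T,\sigma)$. If $(T,\sigma)$ is least resolved w.r.t. $(G,\sigma)$, then every inner edge $e=uv\in E(T)$ (with $v$ a child of $u$) satisfies $\sigma(L(T(v)))\cap\sigma(L(T(u))\setminus L(T(v)))\ne\emptyset$.
   Context: A planted phylogenetic tree $T$ is a rooted tree with distinguished root $0_T$ of degree $1$, all other non-leaf vertices of degree $\ge3$; $L(T)$ its leaves (excluding $0_T$), $|L(T)|\ge2$, $V^0(T)$ its inner vertices; an inner edge is an edge with both endpoints in $V^0(T)$. $\preceq_T$ is the ancestor order towards $0_T$; $T(v)$, $\mathrm{child}(v)$, $\mathrm{lca}_T$ as usual. $\sigma$ maps $L(T)$ to a set of colors. A leaf $y$ is a best match of leaf $x$ if $\sigma(x)\ne\sigma(y)$ and $\mathrm{lca}_T(x,y)\preceq_T\mathrm{lca}_T(x,y')$ for all leaves $y'$ with $\sigma(y')=\sigma(y)$; the RBMG $G(T,\sigma)$ is the undirected vertex-colored graph on $L(T)$ whose edges are the reciprocal best match pairs. $(T,\sigma)$ explains $(G,\sigma)$ if $G(T,\sigma)=(G,\sigma)$. $(T,\sigma)$ is least resolved if for every inner edge $e$, the tree $T_e$ obtained by contracting $e$ satisfies $G(T_e,\sigma)\ne G(T,\sigma)$. *)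

From mathcomp Require Import all_boot.
Set Implicit Arguments. Unset Strict Implicit. Unset Printing Implicit Defensive.

(* A rooted tree is encoded on a finite type V by a vertex set S : {set V},
   a root r \in S and a parent function par : V -> V with par r = r. *)

Definition anc (V : finType) (par : V -> V) (x y : V) : Prop :=
  exists k, iter k par x = y.

Definition children (V : finType) (par : V -> V) (S : {set V}) (r x : V)
  : {set V} := [set y in S | (y != r) && (par y == x)].

Definition leaves (V : finType) (par : V -> V) (S : {set V}) (r : V)
  : {set V} := [set x in S | (x != r) && (children par S r x == set0)].

(* planted phylogenetic tree: root 0_T of degree 1, every other non-leaf
   vertex has degree >= 3 (one parent + >= 2 children), at least 2 leaves *)
Definition is_planted_tree (V : finType) (S : {set V}) (r : V) (par : V -> V)
  : Prop :=
  [/\ r \in S, par r = r,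
      {in S, forall x, par x \in S} &
      {in S, forall x, anc par x r}] /\
  [/\ #|children par S r r| = 1,
      {in S, forall x, x != r -> children par S r x != set0 ->
                       2 <= #|children par S r x|}
    & 2 <= #|leaves par S r|].

Definition inner (V : finType) (par : V -> V) (S : {set V}) (r x : V) : Prop :=
  [/\ x \in S, x != r & x \notin leaves par S r].

Definition is_lca (V : finType) (par : V -> V) (S : {set V}) (x y z : V)
  : Prop :=
  [/\ z \in S, anc par x z, anc par y z &
      forall w, w \in S -> anc par x w -> anc par y w -> anc par z w].

Definition best_match (V : finType) (C : Type) (par : V -> V) (S : {set V})
  (r : V) (sigma : V -> C) (x y : V) : Prop :=
  [/\ x \in leaves par S r, y \in leaves par S r, sigma x <> sigma y &
      forall y', y' \in leaves par S r -> sigma y' = sigma y ->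
      forall z z', is_lca par S x y z -> is_lca par S x y' z' -> anc par z z'].

Definition rbm (V : finType) (C : Type) (par : V -> V) (S : {set V})
  (r : V) (sigma : V -> C) (x y : V) : Prop :=
  best_match par S r sigma x y /\ best_match par S r sigma y x.

(* contraction of the edge uv (v child of u): vertex v is removed and its
   children are reattached to u.  The contracted tree is (S :\ v, contract). *)
Definition contract (V : finType) (par : V -> V) (u v : V) : V -> V :=
  fun x => if par x == v then u else par x.

Definition least_resolved (V : finType) (C : Type) (S : {set V}) (r : V)
  (par : V -> V) (sigma : V -> C) : Prop :=
  forall u v, inner par S r u -> inner par S r v -> par v = u ->
    ~ (forall x y, x \in leaves par S r -> y \in leaves par S r ->
         (rbm par S r sigma x y <->
          rbm (contract par u v) (S :\ v) r sigma x y)).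

From mathcomp Require Import all_boot.
From Stdlib Require Import Classical.
From Stdlib Require Wf_nat.
Set Implicit Arguments. Unset Strict Implicit. Unset Printing Implicit Defensive.

(* Let uv be an
   inner edge, v a child of u, and suppose no color occurs both below v and
   in L(T(u)) \ L(T(v)).  We show that contracting uv leaves the RBMG
   unchanged, which contradicts least resolvedness.
   Contraction removes v and maps every vertex m to [fuse u v m] (v goes to u,
   everything else is fixed).  For vertices other than v it preserves the
   ancestor order and the leaf set, and it maps lca_T(x, y) to
   [fuse u v (lca_T(x, y))].  A best-match test compares lca_T(x, y) with
   lca_T(x, y'); fusing preserves this comparison except when
   lca_T(x, y) = u and lca_T(x, y') = v, and in that case y' lies below v while
   y lies below u but not below v and has the color of y' -- excluded by
   assumption. *)

Lemma least_nat (P : nat -> Prop) n :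
  P n -> exists m, P m /\ forall k, P k -> m <= k.
Proof.
move=> Pn.
have [m [[Pm m_min] _]] :=
  Wf_nat.dec_inh_nat_subset_has_unique_least_element P (fun k => classic (P k))
    (ex_intro _ n Pn).
by exists m; split => // k /m_min /leP.
Qed.

Section Ancestors.
Variables (V : finType) (p : V -> V).

Lemma anc_refl x : anc p x x.
Proof. by exists 0. Qed.

Lemma anc_trans x y z : anc p x y -> anc p y z -> anc p x z.
Proof. by case=> i <- [j <-]; exists (j + i); rewrite iterD. Qed.

Lemma anc_par x : anc p x (p x).
Proof. by exists 1. Qed.

Lemma anc_chain x a b : anc p x a -> anc p x b -> anc p a b \/ anc p b a.
Proof.
case=> i <- [j <-]; case: (leqP i j) => [le_ij | lt_ji].
  by left; exists (j - i); rewrite -iterD subnK.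
by right; exists (i - j); rewrite -iterD subnK // ltnW.
Qed.

Lemma anc_of_par x w : anc p x w -> w != x -> anc p (p x) w.
Proof.
by case=> [[|k] <-] neq_wx; [rewrite eqxx in neq_wx | exists k; rewrite -iterSr].
Qed.

End Ancestors.

Section PlantedTree.
Variables (V : finType) (S : {set V}) (r : V) (par : V -> V).
Hypothesis tree : is_planted_tree S r par.

Lemma iter_root k : iter k par r = r.
Proof. by case: tree => [[_ par_r _ _] _]; elim: k => //= k ->. Qed.

Lemma anc_root x : x \in S -> anc par x r.
Proof. by case: tree => [[_ _ _ to_root] _]; apply: to_root. Qed.

Lemma iter_in_tree x k : x \in S -> iter k par x \in S.
Proof. by case: tree => [[_ _ par_S _] _] xS; elim: k => //= k; apply: par_S. Qed.

Lemma par_fixed_root x : x \in S -> par x = x -> x = r.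
Proof.
move=> xS par_x; have [k <-] := anc_root xS.
have fixed n : iter n par x = x by elim: n => //= n ->.
by rewrite fixed.
Qed.

(* The ancestor order is antisymmetric: a cycle through a would never reach
   the root. *)
Lemma anc_antisym a b : a \in S -> anc par a b -> anc par b a -> a = b.
Proof.
move=> aS [[|i] a_b] [j b_a]; first by [].
have periodic n : iter (n * (j + i.+1)) par a = a.
  by elim: n => // n IHn; rewrite mulSn iterD IHn iterD a_b b_a.
have [k a_r] := anc_root aS.
have a_root : a = r.
  have split_k : k * (j + i.+1) = (k * (j + i.+1) - k) + k.
    by rewrite subnK // leq_pmulr // addnS.
  by rewrite -(periodic k) split_k iterD a_r iter_root.
by rewrite -a_b a_root iter_root.
Qed.

(* lca_T(x, y) exists: it is the first ancestor of x that is above y. *)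
Lemma lca_exists x y : x \in S -> y \in S -> exists m, is_lca par S x y m.
Proof.
move=> xS yS; have [k x_r] := anc_root xS.
have y_above : anc par y (iter k par x) by rewrite x_r; apply: anc_root.
have [j [y_j j_min]] := @least_nat (fun j => anc par y (iter j par x)) k y_above.
exists (iter j par x); split; [exact: iter_in_tree | by exists j | by [] |].
move=> w wS [l <-] y_l; exists (l - j).
by rewrite -iterD subnK // j_min.
Qed.

Lemma lca_unique x y z z' : is_lca par S x y z -> is_lca par S x y z' -> z = z'.
Proof.
by case=> zS x_z y_z z_min [z'S x_z' y_z' z'_min]; apply: anc_antisym; auto.
Qed.

Lemma lca_comparison x y y' m m' :
  is_lca par S x y m -> is_lca par S x y' m' ->
  (forall z z', is_lca par S x y z -> is_lca par S x y' z' -> anc par z z')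
  <-> anc par m m'.
Proof.
move=> lca_m lca_m'; split => [|m_m' z z' lca_z lca_z']; first by apply.
by rewrite -(lca_unique lca_m lca_z) -(lca_unique lca_m' lca_z').
Qed.

End PlantedTree.

(* Where contracting the edge uv sends a vertex m: v is identified with u. *)
Definition fuse (V : eqType) (u v m : V) : V := if m == v then u else m.

Definition color_overlap (V : finType) (C : Type) (S : {set V}) (r : V)
  (par : V -> V) (sigma : V -> C) (u v : V) : Prop :=
  exists a b,
    [/\ a \in leaves par S r, anc par a v & b \in leaves par S r] /\
    [/\ anc par b u, ~ anc par b v & sigma a = sigma b].

Section Contraction.
Variables (V : finType) (S : {set V}) (r : V) (par : V -> V) (u v : V).
Hypothesis tree : is_planted_tree S r par.
Hypotheses (inner_u : inner par S r u) (inner_v : inner par S r v).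
Hypothesis par_v : par v = u.

Local Notation par' := (contract par u v).
Local Notation S' := (S :\ v).

(* The edge uv is a genuine edge: v is not the root, so par v <> v. *)
Lemma u_neq_v : u != v.
Proof.
case: inner_v => vS v_r _; apply: contraNneq v_r => u_v.
by apply/eqP/(par_fixed_root tree vS); rewrite par_v u_v.
Qed.

Lemma v_anc_u : anc par v u.
Proof. by rewrite -par_v; apply: anc_par. Qed.

Lemma u_in_tree : u \in S.
Proof. by case: inner_u. Qed.

Lemma iter_contract x k :
  x != v -> exists j, iter k par' x = iter j par x /\ iter k par' x != v.
Proof.
move=> x_v; elim: k => [|k [j [iter_k j_v]]]; first by exists 0.
rewrite /= iter_k /contract.
case: eqP => [par_j | /eqP par_j]; last by exists j.+1.
by exists j.+2; rewrite /= par_j par_v u_neq_v.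
Qed.

Lemma anc_contract x y : x != v -> y != v -> anc par' x y <-> anc par x y.
Proof.
move=> x_v y_v; split => [[k <-] | [j y_j]].
  by have [j [-> _]] := iter_contract k x_v; exists j.
move: y_v; rewrite -{}y_j.
elim/ltn_ind: j x x_v => [[|j] IH] x x_v; first by move=> _; apply: anc_refl.
rewrite iterSr; case: (eqVneq (par x) v) => [par_x | par_x_v].
  case: j IH => [|j] IH j_v; first by rewrite par_x eqxx in j_v.
  rewrite iterSr par_x par_v in j_v *.
  apply: anc_trans (IH j (ltnW (ltnSn j)) u u_neq_v j_v).
  by exists 1; rewrite /= /contract par_x eqxx.
move=> j_v; apply: anc_trans (IH j (ltnSn j) _ par_x_v j_v).
by exists 1; rewrite /= /contract (negbTE par_x_v).
Qed.

(* A vertex other than v has children after contraction iff it had some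
   before: the children of v are reattached to u, which had the child v. *)
Lemma has_child_contract z : z != v ->
  (children par' S' r z != set0) = (children par S r z != set0).
Proof.
move=> z_v; apply/set0Pn/set0Pn => [[y] | [y]]; rewrite !inE.
- case/and3P=> /andP [y_v yS] y_r; rewrite /contract.
  case: (eqVneq (par y) v) => [par_y | _] /eqP <-; last by exists y; rewrite !inE yS y_r eqxx.
  by case: inner_v => vS v_r _; exists v; rewrite !inE vS v_r par_v eqxx.
- case/and3P=> yS y_r /eqP par_y; case: (eqVneq y v) => [y_v | y_v].
    case: inner_v => vS v_r; rewrite inE vS v_r /= => /set0Pn [c].
    rewrite !inE => /and3P [cS c_r /eqP par_c].
    have c_v : c != v by apply: contraNneq u_neq_v => c_v; rewrite -par_v -{1}c_v par_c.
    by exists c; rewrite !inE c_v cS c_r /contract par_c eqxx -par_y y_v par_v eqxx.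
  by exists y; rewrite !inE y_v yS y_r /contract par_y (negbTE z_v) eqxx.
Qed.

Lemma leaves_contract z : (z \in leaves par' S' r) = (z \in leaves par S r).
Proof.
case: (eqVneq z v) => [-> | z_v].
  by case: inner_v => _ _ /negbTE ->; rewrite !inE eqxx.
rewrite !inE z_v /=; congr [&& _, _ & _].
by apply/idP/idP; apply: contraLR; rewrite -!/(_ != set0) has_child_contract.
Qed.

Lemma fuse_neq_v m : fuse u v m != v.
Proof. by rewrite /fuse; case: (eqVneq m v) => // _; apply: u_neq_v. Qed.

Lemma fuse_in_tree m : m \in S -> fuse u v m \in S.
Proof. by rewrite /fuse; case: eqP => // _ _; apply: u_in_tree. Qed.

Lemma anc_to_fuse x m : anc par x m -> anc par x (fuse u v m).
Proof.
by rewrite /fuse; case: (eqVneq m v) => // -> x_v; apply: anc_trans x_v v_anc_u.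
Qed.

Lemma anc_from_fuse m w : anc par m w -> w != v -> anc par (fuse u v m) w.
Proof.
by rewrite /fuse; case: (eqVneq m v) => // -> v_w w_v; rewrite -par_v; apply: anc_of_par.
Qed.

Lemma lca_contract x y m : x != v -> y != v ->
  is_lca par S x y m -> is_lca par' S' x y (fuse u v m).
Proof.
move=> x_v y_v [mS x_m y_m m_min]; have fm_v := fuse_neq_v m.
split; first by rewrite !inE fm_v fuse_in_tree.
- by apply/anc_contract => //; apply: anc_to_fuse.
- by apply/anc_contract => //; apply: anc_to_fuse.
move=> w; rewrite !inE => /andP [w_v wS].
move=> /(anc_contract x_v w_v) x_w /(anc_contract y_v w_v) y_w.
by apply/anc_contract/anc_from_fuse => //; apply: m_min.
Qed.

Lemma lca_contract_unique x y z z' :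
  is_lca par' S' x y z -> is_lca par' S' x y z' -> z = z'.
Proof.
case=> + x_z y_z z_min [+ x_z' y_z' z'_min]; rewrite !inE.
case/andP=> z_v zS /andP [z'_v z'S]; apply: (anc_antisym tree zS).
- by apply/anc_contract/z_min; rewrite // !inE z'_v.
- by apply/anc_contract/z'_min; rewrite // !inE z_v.
Qed.

Lemma fuse_anc_iff x m m' : m \in S -> anc par x m -> anc par x m' ->
  (m = u -> m' <> v) -> anc par m m' <-> anc par (fuse u v m) (fuse u v m').
Proof.
move=> mS x_m x_m' not_uv; rewrite /fuse.
case: (eqVneq m v) => [m_eq | m_v]; case: (eqVneq m' v) => [m'_eq | m'_v] //.
- by rewrite m_eq m'_eq; split => _; apply: anc_refl.
- rewrite m_eq; split => [v_m' | u_m']; last by apply: anc_trans v_anc_u u_m'.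
  by rewrite -par_v; apply: anc_of_par.
- subst m'; split => [m_v' | m_u]; first by apply: anc_trans m_v' v_anc_u.
  case: (anc_chain x_m x_m') => // v_m.
  have m_eq_u : m = u.
    by apply: (anc_antisym tree mS) => //; rewrite -par_v; apply: anc_of_par.
  by case: (not_uv m_eq_u).
Qed.

Variables (C : Type) (sigma : V -> C).
Hypothesis no_overlap : ~ color_overlap S r par sigma u v.

Lemma lca_comparison_contract x y y' :
  x \in leaves par S r -> y \in leaves par S r -> y' \in leaves par S r ->
  sigma y' = sigma y ->
  (forall z z', is_lca par S x y z -> is_lca par S x y' z' -> anc par z z') <->
  (forall z z', is_lca par' S' x y z -> is_lca par' S' x y' z' -> anc par' z z').
Proof.
move=> xL yL y'L same_color.
have leaf_S w : w \in leaves par S r -> w \in S by rewrite inE => /andP [].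
have leaf_v w : w \in leaves par S r -> w != v.
  by case: inner_v => _ _ vL wL; apply: contraNneq vL => <-.
have [m lca_m] := lca_exists tree (leaf_S x xL) (leaf_S y yL).
have [m' lca_m'] := lca_exists tree (leaf_S x xL) (leaf_S y' y'L).
have lca_m_c := lca_contract (leaf_v x xL) (leaf_v y yL) lca_m.
have lca_m'_c := lca_contract (leaf_v x xL) (leaf_v y' y'L) lca_m'.
rewrite (lca_comparison tree lca_m lca_m').
have -> : (forall z z', is_lca par' S' x y z -> is_lca par' S' x y' z' ->
             anc par' z z') <-> anc par (fuse u v m) (fuse u v m').
  rewrite -anc_contract ?fuse_neq_v //; split => [|m_m' z z']; first by apply.
  by move=> /(lca_contract_unique lca_m_c) <- /(lca_contract_unique lca_m'_c) <-.
case: lca_m lca_m' => mS x_m y_m m_min [m'S x_m' y'_m' m'_min].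
apply: (@fuse_anc_iff x) => // m_u m'_v; apply: no_overlap; exists y', y.
subst m m'; split; split => // y_v.
have u_v : anc par u v by apply: m_min => //; case: inner_v.
by move: u_neq_v; rewrite (anc_antisym tree u_in_tree u_v v_anc_u) eqxx.
Qed.

Lemma best_match_contract x y :
  x \in leaves par S r -> y \in leaves par S r ->
  best_match par S r sigma x y <-> best_match par' S' r sigma x y.
Proof.
move=> xL yL; rewrite /best_match !leaves_contract.
split; case=> _ _ diff_color y_best; split => // y' y'L same_color.
- by rewrite leaves_contract in y'L; apply/lca_comparison_contract/y_best.
- by apply/(lca_comparison_contract xL yL y'L)/y_best; rewrite ?leaves_contract.
Qed.

End Contraction.

Theorem mainTheorem10 (V : finType) (C : Type) (S : {set V}) (r : V)
  (par : V -> V) (sigma : V -> C) (G : V -> V -> Prop) :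
  is_planted_tree S r par ->
  (* (T, sigma) explains (G, sigma): G = G(T, sigma) on L(T) *)
  (forall x y, x \in leaves par S r -> y \in leaves par S r ->
     (G x y <-> rbm par S r sigma x y)) ->
  least_resolved S r par sigma ->
  forall u v, inner par S r u -> inner par S r v -> par v = u ->
    exists a b,
      [/\ a \in leaves par S r, anc par a v &
           b \in leaves par S r] /\
      [/\ anc par b u, ~ anc par b v & sigma a = sigma b].
Proof.
move=> tree _ least_res u v inner_u inner_v par_v.
change (color_overlap S r par sigma u v).
apply: NNPP => no_overlap; apply: (least_res u v inner_u inner_v par_v).
move=> x y xL yL; rewrite /rbm.
by rewrite !(best_match_contract tree inner_u inner_v par_v no_overlap).
Qed.
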